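(* Let $k,l\geq0$ be integers and $X,Y,Z,V$ be $N\times N$ real symmetric positive semidefinite matrices. Then, in the Löwner order, \[ X^{k}\otimes V\otimes X^{l}+(X+Y+Z)^{k}\otimes V\otimes(X+Y+Z)^{l}\geq(X+Y)^{k}\otimes V\otimes(X+Y)^{l}+(X+Z)^{k}\otimes V\otimes(X+Z)^{l}. \]
   Context: Notation: for a matrix $W$ and $j\geq1$, $W^{j}$ denotes the $j$-fold tensor (Kronecker) power $W\otimes\cdots\otimes W$, and $W^{0}=1$ (the scalar one, so that tensoring with $W^{0}$ leaves a factor unchanged). The Löwner order: $S\leq T$ iff $T-S$ is positive semidefinite. *)

(* Kronecker products/powers from mathcomp real_closed mxtens:
   A *t B (tensmx) and A ^t k (ntensmx, with A ^t 0 = 1 : 'M_1). *)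
From mathcomp Require Import all_boot all_order all_algebra.
From mathcomp Require Export mxtens.
From mathcomp Require Export reals.
Set Implicit Arguments. Unset Strict Implicit. Unset Printing Implicit Defensive.
Import Order.TTheory GRing.Theory Num.Theory.
Local Open Scope ring_scope.

Definition psdmx {R : realType} {n : nat} (A : 'M[R]_n) : Prop :=
  A^T = A /\ forall v : 'cV[R]_n, 0 <= (v^T *m A *m v) 0 0.

Definition loewner_le {R : realType} {n : nat} (S T : 'M[R]_n) : Prop :=
  psdmx (T - S).

(* Index [X], [X + Y], [X + Z], [X + Y + Z] by the subsets of {Y, Z}: this
   quadruple is PSD, Loewner-monotone and Loewner-supermodular.  As Kronecker
   products of PSD matrices are PSD, bilinearity shows that these three
   properties survive Kronecker products of quadruples; the theorem is the
   supermodularity of the product of k copies of the quadruple, the constant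
   quadruple V, and l more copies.  Kronecker products of PSD matrices are PSD
   because PSD matrices are Gram matrices M^T M, obtained by repeatedly
   splitting off the rank-one part at a nonzero diagonal entry (Schur
   complement). *)
From mathcomp Require Import all_boot all_order all_algebra.
From mathcomp Require Import mxtens reals ring lra.
Set Implicit Arguments. Unset Strict Implicit. Unset Printing Implicit Defensive.
Import Order.TTheory GRing.Theory Num.Theory.
Local Open Scope ring_scope.

Section PsdMatrices.
Variable R : realType.

Definition qform n (A : 'M[R]_n) (u v : 'cV[R]_n) : R := (u^T *m A *m v) 0 0.

Lemma qform_sym n (A : 'M[R]_n) u v : A^T = A -> qform A u v = qform A v u.
Proof.
move=> sA; rewrite /qform.
have -> : u^T *m A *m v = (v^T *m A *m u)^T by rewrite !trmx_mul trmxK sA mulmxA.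
by rewrite mxE.
Qed.

Lemma qformDZ n (A : 'M[R]_n) v x (t : R) : A^T = A ->
  qform A (v + t *: x) (v + t *: x) =
  qform A v v + 2 * t * qform A x v + t ^+ 2 * qform A x x.
Proof.
move=> sA; have := qform_sym v x sA; rewrite /qform.
rewrite [(v + _)^T]linearD /= [(t *: x)^T]linearZ /= !mulmxDl !mulmxDr.
by rewrite -!scalemxAl -!scalemxAr !mxE => ->; ring.
Qed.

Lemma qform_deltal n (A : 'M[R]_n) i v :
  qform A (delta_mx i 0) v = (row i A *m v) 0 0.
Proof. by rewrite /qform trmx_delta -rowE. Qed.

Lemma qform_delta n (A : 'M[R]_n) i j :
  qform A (delta_mx i 0) (delta_mx j 0) = A i j.
Proof. by rewrite qform_deltal -colE !mxE. Qed.

Lemma qform_rank1 n (w : 'rV[R]_n) v : qform (w^T *m w) v v = (w *m v) 0 0 ^+ 2.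
Proof. by rewrite /qform mulmxA -mulmxA -trmx_mul mxE big_ord1 mxE expr2. Qed.

Lemma psdmx0 n : psdmx (0 : 'M[R]_n).
Proof. by split=> [|v]; rewrite ?trmx0 // mulmx0 mul0mx mxE. Qed.

Lemma psdmxD n (A B : 'M[R]_n) : psdmx A -> psdmx B -> psdmx (A + B).
Proof.
move=> [sA pA] [sB pB]; split=> [|v]; first by rewrite linearD /= sA sB.
by rewrite mulmxDr mulmxDl mxE addr_ge0.
Qed.

Lemma psdmx_mulTmx p n (M : 'M[R]_(p, n)) : psdmx (M^T *m M).
Proof.
split=> [|v]; first by rewrite trmx_mul trmxK.
rewrite !mulmxA -trmx_mul -mulmxA mxE.
by apply: sumr_ge0 => i _; rewrite !mxE -expr2 sqr_ge0.
Qed.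

Lemma psdmx1 n : psdmx (1%:M : 'M[R]_n).
Proof. by have := psdmx_mulTmx (1%:M : 'M[R]_n); rewrite trmx1 mulmx1. Qed.

Lemma psdmx_diag_ge0 n (A : 'M[R]_n) i : psdmx A -> 0 <= A i i.
Proof. by case=> _ /(_ (delta_mx i 0)); rewrite -/(qform _ _ _) qform_delta. Qed.

Lemma psdmx_diag0 n (A : 'M[R]_n) i j : psdmx A -> A i i = 0 -> A i j = 0.
Proof.
move=> [sA pA] Aii0; apply/eqP/negPn/negP => Aij_neq0.
(* Along e_j + t e_i the form is affine in t with nonzero slope. *)
pose t := - (A j j + 1) / (2 * A i j).
have := pA (delta_mx j 0 + t *: delta_mx i 0).
rewrite -/(qform _ _ _) qformDZ // !qform_delta Aii0 mulr0 addr0.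
have -> : 2 * t * A i j = - (A j j + 1) by rewrite /t; field.
lra.
Qed.

Definition schur_compl n (A : 'M[R]_n) i : 'M[R]_n :=
  A - (A i i)^-1 *: ((row i A)^T *m row i A).

Lemma schur_complE n (A : 'M[R]_n) i j k :
  schur_compl A i j k = A j k - A i j * A i k / A i i.
Proof. by rewrite !mxE big_ord1 !mxE; ring. Qed.

Lemma psdmx_schur_compl n (A : 'M[R]_n) i :
  psdmx A -> 0 < A i i -> psdmx (schur_compl A i).
Proof.
move=> [sA pA] Aii_gt0; split.
  by rewrite /schur_compl linearB linearZ /= trmx_mul trmxK sA.
move=> v; set b := qform A (delta_mx i 0) v.
have -> : (v^T *m schur_compl A i *m v) 0 0 = qform A v v - b ^+ 2 / A i i.
  rewrite /b qform_deltal -qform_rank1 mulrC.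
  by rewrite /schur_compl /qform mulmxBr mulmxBl -scalemxAr -scalemxAl !mxE.
(* t = - b / A i i minimises t |-> qform A (v + t e_i) (v + t e_i). *)
have := pA (v + (- b / A i i) *: delta_mx i 0).
rewrite -/(qform _ _ _) qformDZ // qform_delta -/b -addrA.
have -> : 2 * (- b / A i i) * b + (- b / A i i) ^+ 2 * A i i = - (b ^+ 2 / A i i).
  by field; rewrite gt_eqF.
by rewrite subr_ge0.
Qed.

Lemma schur_compl_diag0 n (A : 'M[R]_n) i j :
  psdmx A -> 0 < A i i -> (j == i) || (A j j == 0) -> schur_compl A i j j = 0.
Proof.
move=> pA Aii_gt0 /orP[/eqP-> | /eqP Ajj0]; rewrite schur_complE.
  by field; rewrite gt_eqF.
have sA : A^T = A by case: pA.
have -> : A i j = 0 by rewrite -sA mxE; apply: psdmx_diag0.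
by rewrite Ajj0 !mul0r subr0.
Qed.

Lemma schur_compl_rank1 n (A : 'M[R]_n) i : 0 < A i i ->
  let u := (Num.sqrt (A i i))^-1 *: row i A in A = schur_compl A i + u^T *m u.
Proof.
move=> Aii_gt0 u; rewrite /schur_compl /u [(_ *: row i A)^T]linearZ /=.
rewrite -scalemxAl -scalemxAr scalerA -expr2 exprVn sqr_sqrtr ?ltW //.
by rewrite subrK.
Qed.

Lemma psdmx_gram n (A : 'M[R]_n) :
  psdmx A -> exists p (M : 'M[R]_(p, n)), A = M^T *m M.
Proof.
have [m] := ubnP #|[pred i | A i i != 0]|.
elim: m A => // m IH A supp_lt pA.
have [i /= Aii_neq0 | diag0] := pickP [pred i | A i i != 0]; last first.
  exists 0%N, 0; rewrite mulmx0; apply/matrixP => i j; rewrite mxE.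
  by apply: psdmx_diag0 => //; apply/eqP/negbFE/diag0.
have Aii_gt0 : 0 < A i i by rewrite lt_def Aii_neq0 psdmx_diag_ge0.
have supp_sub : [pred j | schur_compl A i j j != 0]
    \subset [predD1 [pred j | A j j != 0] & i].
  apply/subsetP => j; rewrite !inE; apply: contraR; rewrite negb_and !negbK.
  by move=> ?; apply/eqP/schur_compl_diag0.
have supp_lt_m : (#|[pred j | schur_compl A i j j != 0%R]| < m)%N.
  apply: leq_ltn_trans (subset_leq_card supp_sub) _.
  by rewrite (cardD1 i) inE /= Aii_neq0 in supp_lt.
have [p [M defS]] := IH _ supp_lt_m (psdmx_schur_compl pA Aii_gt0).
exists (p + 1)%N, (col_mx M ((Num.sqrt (A i i))^-1 *: row i A)).
by rewrite tr_col_mx mul_row_col -defS -schur_compl_rank1.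
Qed.

Lemma psdmx_tens m n (A : 'M[R]_m) (B : 'M[R]_n) :
  psdmx A -> psdmx B -> psdmx (A *t B).
Proof.
move=> /psdmx_gram[p [M ->]] /psdmx_gram[q [P ->]].
by rewrite -tensmx_mul -trmx_tens; apply: psdmx_mulTmx.
Qed.

Definition loewner_supermodular n (a0 aY aZ aYZ : 'M[R]_n) : Prop :=
  [/\ psdmx a0, loewner_le a0 aY, loewner_le a0 aZ & loewner_le (aY + aZ) (a0 + aYZ)].

Lemma loewner_supermodular_tens m n (a0 aY aZ aYZ : 'M[R]_m) (b0 bY bZ bYZ : 'M[R]_n) :
  loewner_supermodular a0 aY aZ aYZ -> loewner_supermodular b0 bY bZ bYZ ->
  loewner_supermodular (a0 *t b0) (aY *t bY) (aZ *t bZ) (aYZ *t bYZ).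
Proof.
rewrite /loewner_supermodular /loewner_le.
move=> [pa0 paY paZ paYZ] [pb0 pbY pbZ pbYZ].
set dY := aY - a0 in paY *; set dZ := aZ - a0 in paZ *.
set dYZ := a0 + aYZ - (aY + aZ) in paYZ *.
set eY := bY - b0 in pbY *; set eZ := bZ - b0 in pbZ *.
set eYZ := b0 + bYZ - (bY + bZ) in pbYZ *.
split.
- exact: psdmx_tens.
- have -> : aY *t bY - a0 *t b0 = a0 *t eY + dY *t b0 + dY *t eY.
    by apply/matrixP => i j; rewrite !mxE; ring.
  by repeat first [assumption | apply: psdmxD | apply: psdmx_tens].
- have -> : aZ *t bZ - a0 *t b0 = a0 *t eZ + dZ *t b0 + dZ *t eZ.
    by apply/matrixP => i j; rewrite !mxE; ring.
  by repeat first [assumption | apply: psdmxD | apply: psdmx_tens].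
- have -> : a0 *t b0 + aYZ *t bYZ - (aY *t bY + aZ *t bZ) =
      a0 *t eYZ + dY *t eZ + dZ *t eY + dYZ *t b0 + dY *t eYZ + dZ *t eYZ
      + dYZ *t eY + dYZ *t eZ + dYZ *t eYZ.
    by apply/matrixP => i j; rewrite !mxE; ring.
  by repeat first [assumption | apply: psdmxD | apply: psdmx_tens].
Qed.

Lemma loewner_supermodular_const n (V : 'M[R]_n) :
  psdmx V -> loewner_supermodular V V V V.
Proof.
by move=> pV; rewrite /loewner_supermodular /loewner_le !subrr; split=> //; apply: psdmx0.
Qed.

Lemma loewner_supermodular_add n (X Y Z : 'M[R]_n) :
  psdmx X -> psdmx Y -> psdmx Z ->
  loewner_supermodular X (X + Y) (X + Z) (X + Y + Z).
Proof.
move=> pX pY pZ; split; rewrite /loewner_le ?[X + _ - X]addrC ?addKr //.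
by rewrite addrACA -[X + Y + Z]addrA [X + (X + _)]addrA subrr; apply: psdmx0.
Qed.

Lemma loewner_supermodular_ntens n (X Y Z : 'M[R]_n) k :
  psdmx X -> psdmx Y -> psdmx Z ->
  loewner_supermodular (X ^t k) ((X + Y) ^t k) ((X + Z) ^t k) ((X + Y + Z) ^t k).
Proof.
move=> pX pY pZ; elim: k => [|[|k] IH].
- by rewrite !ntensmx0; apply/loewner_supermodular_const/psdmx1.
- by rewrite !ntensmx1; apply: loewner_supermodular_add.
- by rewrite !ntensmxSS; apply: loewner_supermodular_tens => //; apply: loewner_supermodular_add.
Qed.

End PsdMatrices.

Theorem lemma5p9 (R : realType) (N k l : nat) (X Y Z V : 'M[R]_N) :
  psdmx X -> psdmx Y -> psdmx Z -> psdmx V ->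
  loewner_le
    ((X + Y) ^t k *t V *t (X + Y) ^t l + (X + Z) ^t k *t V *t (X + Z) ^t l)
    (X ^t k *t V *t X ^t l + (X + Y + Z) ^t k *t V *t (X + Y + Z) ^t l).
Proof.
move=> pX pY pZ pV.
have powk := loewner_supermodular_ntens k pX pY pZ.
have powl := loewner_supermodular_ntens l pX pY pZ.
have constV := loewner_supermodular_const pV.
by case: (loewner_supermodular_tens (loewner_supermodular_tens powk constV) powl).
Qed.
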